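(* Regard the partially spherical subalgebra $e'H_pe'$ as a subring of $\mathscr K=\mathbb{C}(U_1,\dots,U_n)\star(T\rtimes S_n)$ via its action on $\mathbb{C}[U_1,\dots,U_n]$ described below. Then $e'H_pe'$ is a principal Galois $\mathbb{C}[U_1,\dots,U_n]$-order in $\mathscr K$.
   Context: Setting: $\ell,p,n$ positive integers, $p\mid\ell$, $\zeta=e^{2\pi i/\ell}$. $G(\ell,p,n)$ is the group of $n\times n$ monomial matrices with $\ell$-th root of unity entries whose product is an $(\ell/p)$-th root of unity. $H_p$ is the rational Cherednik algebra of $G(\ell,p,n)$ (quotient of $T(\mathfrak h\oplus\mathfrak h^* )\rtimes\mathbb{C}G(\ell,p,n)$, $\mathfrak h=\mathbb{C}^n$, by $[x,x']=0,[y,y']=0,[x,y]=\hbar\langle y,x\rangle-\sum_s c_s\langle\alpha_s,x\rangle\langle y,\alpha_s^\vee\rangle s$) with $\hbar\in\mathbb{C}^\times$, parameter $c$ on the reflections $t_i^kt_j^{-k}(i,j)$ and $c_m$ on $t_i^m$ ($t_i=\mathrm{diag}(1,..,\zeta,..,1)$), where $c_m=0$ unless $p\mid m$. Put $h_r=\sum_{m=1}^{\ell-1}c_m\zeta^{rm}$, $s_m=h_m+m\hbar$ ($m\in\mathbb{Z}$); then $s_{m+\ell/p}=s_m+\ell\hbar/p$. Let $A\subset G(\ell,p,n)$ be the diagonal subgroup and $e'=\frac1{|A|}\sum_{g\in A}g$; the partially spherical subalgebra is $e'H_pe'$. Skew ring: $T\subset\mathbb{Z}^n$ is the lattice generated by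 $\ell e_i$ ($1\le i\le n$) and $\frac{\ell}{p}(e_1+\dots+e_n)$, acting on $\mathbb{C}(U_1,\dots,U_n)$ by $\mu_i(U_j)=U_j+\hbar\delta_{ij}$; $S_n$ permutes the $U_j$. $\mathscr K=\mathbb{C}(U)\star(T\rtimes S_n)$ is the free left $\mathbb{C}(U)$-module on $T\rtimes S_n$ with $(a\mu)(b\nu)=a\mu(b)\mu\nu$; it acts on $K=\mathbb{C}(U)$ by evaluation $(\sum a_\mu\mu)(f)=\sum a_\mu\mu(f)$. Embedding: $H_p$ has a faithful polynomial representation in which $e'H_pe'$ preserves a subspace identified with $\mathbb{C}[U_1,\dots,U_n]$; each element of $e'H_pe'$ acts by the evaluation action of a unique element of $\mathscr K$, and $e'H_pe'$ is generated by elements acting by: multiplication by $U_i$; $f\mapsto f^{w_i}+c\ell\frac{f^{w_i}-f}{U_{i+1}-U_i}$ ($w_i$ swapping $U_i,U_{i+1}$, $1\le i\le n-1$); $f\mapsto\prod_{m=0}^{\ell-1}(U_1+\ell\hbar-s_m)f(U_2,\dots,U_n,U_1+\ell\hbar)$; $f\mapsto f(U_n-\ell\hbar,U_1,\dots,U_{n-1})$; $f\mapsto\prod_{i=1}^n\prod_{m=0}^{\ell/p-1}(U_i+\ell\hbar/p-s_m)f(U_1+\ell\hbar/p,\dots,U_n+\ell\hbar/p)$; $f\mapsto f(U_1-\ell\hbar/p,\dots,U_n-\ell\hbar/p)$; and for $1\le i\le n-1$, $1\le j\le p-1$: $f\mapsto\prod_{r=1}^i\prod_{m=0}^{j\ell/p-1}(U_r+j\ell\hbar/p-s_m)f(U_{i+1}+j\ell\hbar/p-\ell\hbar,\dots,U_n+j\ell\hbar/p-\ell\hbar,U_1+j\ell\hbar/p,\dots,U_i+j\ell\hbar/p)$.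 Definitions (with $\Gamma=\mathbb{C}[U]$): a $\Gamma$-subring $\mathscr U\subseteq\mathscr K$ is a Galois $\Gamma$-ring if $\mathscr UK=\mathscr K=K\mathscr U$; it is a Galois $\Gamma$-order if moreover for every finite-dimensional left (resp. right) $K$-subspace $W\subseteq\mathscr K$, $W\cap\mathscr U$ is a finitely generated left (resp. right) $\Gamma$-module; it is principal if it is a Galois $\Gamma$-ring and $\Gamma\subset K$ is stable under the evaluation action of $\mathscr U$ (principal Galois rings are Galois orders). *)

From HB Require Import structures.
From mathcomp Require Import all_boot all_order all_algebra all_fingroup.
From mathcomp Require Import generic_quotient fraction.
From mathcomp Require Import mpoly.
From mathcomp Require Import complex Rstruct.
From Stdlib Require Rdefinitions Rtrigo_def Rtrigo1.

Set Implicit Arguments.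
Unset Strict Implicit.
Unset Printing Implicit Defensive.
Import GRing.Theory.
Local Open Scope ring_scope.

Notation "x %:F" := (@FracField.tofrac _ x) : ring_scope.

Definition CC : Type := (Rdefinitions.R)[i].

Definition zeta (l : nat) : CC :=
  Complex (Rtrigo_def.cos (2 * Rtrigo1.PI / l%:R)) (Rtrigo_def.sin (2 * Rtrigo1.PI / l%:R)).

Section Skew.
Variable n : nat.

(* Gamma = C[U_1,...,U_n] (variables indexed by 'I_n, 0-based),
   K = C(U_1,...,U_n) its fraction field. *)
Definition Gam := {mpoly CC[n]}.
Definition KK := {fraction {mpoly CC[n]}}.

(* Group elements g = (sigma, t), sigma a permutation, t in Z^n.  g acts on K
   as the C-algebra automorphism U_j |-> U_(sigma j) + hbar * t_j, i.e.
   (g f)(U_1,...,U_n) = f(U_(sigma 1) + hbar t_1, ..., U_(sigma n) + hbar t_n). *)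
Definition grp := ({perm 'I_n} * {ffun 'I_n -> int})%type.

Variable hb : CC.

Definition psub (g : grp) (q : {mpoly CC[n]}) : {mpoly CC[n]} :=
  q \mPo [tuple ('X_(g.1 j) + (hb * (g.2 j)%:~R)%:MP) | j < n].

Definition act (g : grp) (x : KK) : KK :=
  (psub g \n_(repr x))%:F / (psub g \d_(repr x))%:F.

(* group law, chosen so that act (gmul g h) = act g \o act h *)
Definition gmul (g h : grp) : grp :=
  ((h.1 * g.1)%g, [ffun j => g.2 (h.1 j) + h.2 j]).
Definition gone : grp := (1%g, [ffun=> 0]).

(* Elements of the skew ring K * (T x| S_n): formal finite sums
   sum_k a_k g_k, represented by lists of pairs (a_k, g_k); two lists
   represent the same element iff they have the same coefficient function. *)
Definition skew := seq (KK * grp).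

Definition coefK (s : skew) (g : grp) : KK := \sum_(x <- s | x.2 == g) x.1.
Definition skeq (s t : skew) : Prop := forall g, coefK s g = coefK t g.

Definition skmul (s t : skew) : skew :=
  [seq (x.1 * act x.2 y.1, gmul x.2 y.2) | x <- s, y <- t].

Definition skeval (s : skew) (f : KK) : KK := \sum_(x <- s) x.1 * act x.2 f.

Definition kelt (a : KK) : skew := [:: (a, gone)].

(* T = lattice generated by l e_i (1<=i<=n) and (l/p)(e_1+...+e_n) *)
Definition inT (l p : nat) (t : {ffun 'I_n -> int}) : Prop :=
  exists (k : int) (a : 'I_n -> int),
    forall j, t j = a j * l%:Z + k * (l %/ p)%:Z.

Definition inKK (l p : nat) (s : skew) : Prop :=
  forall g, coefK s g != 0 -> inT l p g.2.

(* U K = { sum_i u_i k_i } and K U = { sum_i k_i u_i } *)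
Definition UK (U : skew -> Prop) (s : skew) : Prop :=
  exists r : seq (skew * KK), (forall u, List.In u r -> U u.1) /\
    skeq s (flatten [seq skmul u.1 (kelt u.2) | u <- r]).
Definition KU (U : skew -> Prop) (s : skew) : Prop :=
  exists r : seq (KK * skew), (forall u, List.In u r -> U u.2) /\
    skeq s (flatten [seq skmul (kelt u.1) u.2 | u <- r]).

Definition gamma_subring (l p : nat) (U : skew -> Prop) : Prop :=
  [/\ forall s, U s -> inKK l p s,
      forall s t, skeq s t -> U s -> U t,
      forall f : {mpoly CC[n]}, U (kelt f%:F),
      forall s t, U s -> U t -> U (s ++ t)
    & forall s t, U s -> U t -> U (skmul s t)].

Definition galois_ring (l p : nat) (U : skew -> Prop) : Prop :=
  [/\ gamma_subring l p U,
      forall s, UK U s <-> inKK l p s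
    & forall s, KU U s <-> inKK l p s].

Definition principal_galois_order (l p : nat) (U : skew -> Prop) : Prop :=
  galois_ring l p U /\
  forall s, U s -> forall f : {mpoly CC[n]},
    exists q : {mpoly CC[n]}, skeval s f%:F = q%:F.

Variables (l p : nat) (c : CC) (cm : nat -> CC).

Definition hh (r : nat) : CC := \sum_(1 <= m < l) cm m * zeta l ^+ (r * m).
Definition ss (m : nat) : CC := hh m + m%:R * hb.

Definition cst (a : CC) : KK := (a%:MP)%:F.
Definition Uf (i : 'I_n) : KK := ('X_i)%:F.
(* U_(j+1) (0-based index j), or 0 if j >= n *)
Definition Uv (j : nat) : KK := if (insub j : option 'I_n) is Some i then Uf i else 0.

Definition cyc : {perm 'I_n} := perm (@ordS_inj n).

Definition genU (i : 'I_n) : skew := [:: (Uf i, gone)].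
(* f |-> f^{w_i} + c l (f^{w_i} - f)/(U_{i+1} - U_i),  i1 = i + 1 *)
Definition genW (i i1 : 'I_n) : skew :=
  let d := cst (c * l%:R) / (Uf i1 - Uf i) in
  [:: (1 + d, (tperm i i1, [ffun=> 0])); (- d, gone)].
(* f |-> prod_{m=0}^{l-1} (U_1 + l hbar - s_m) f(U_2,...,U_n,U_1 + l hbar) *)
Definition genA : skew :=
  [:: (\prod_(m < l) (Uv 0 + cst (l%:R * hb) - cst (ss m)),
       (cyc, [ffun j : 'I_n => if val j == n.-1 then l%:Z else 0]))].
(* f |-> f(U_n - l hbar, U_1, ..., U_{n-1}) *)
Definition genB : skew :=
  [:: (1, ((cyc^-1)%g, [ffun j : 'I_n => if val j == 0%N then - l%:Z else 0]))].
(* f |-> prod_i prod_{m=0}^{l/p-1} (U_i + l hbar/p - s_m) f(U + l hbar/p) *)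
Definition genC : skew :=
  [:: (\prod_(i < n) \prod_(m < l %/ p)
         (Uf i + cst (l%:R * hb / p%:R) - cst (ss m)),
       (1%g, [ffun=> (l %/ p)%:Z]))].
(* f |-> f(U - l hbar/p) *)
Definition genD : skew := [:: (1, (1%g, [ffun=> - (l %/ p)%:Z]))].
(* for 1<=i<=n-1, 1<=j<=p-1:
   f |-> prod_{r=1}^i prod_{m=0}^{jl/p-1} (U_r + j l hbar/p - s_m)
         f(U_{i+1} + j l hbar/p - l hbar, ..., U_n + j l hbar/p - l hbar,
           U_1 + j l hbar/p, ..., U_i + j l hbar/p) *)
Definition genE (i j : nat) : skew :=
  [:: (\prod_(r < n | (r < i)%N) \prod_(m < j * (l %/ p))
         (Uf r + cst (j%:R * l%:R * hb / p%:R) - cst (ss m)),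
       ((cyc ^+ i)%g,
        [ffun k : 'I_n => (j * (l %/ p))%:Z - (if (k < n - i)%N then l%:Z else 0)]))].

(* e'H_p e', viewed in the skew ring: the C-subalgebra generated by the
   elements above (closed under sums and products; scalars included) *)
Inductive gen : skew -> Prop :=
| gen_scal (a : CC) : gen (kelt (cst a))
| gen_U (i : 'I_n) : gen (genU i)
| gen_W (i i1 : 'I_n) : val i1 = (val i).+1 -> gen (genW i i1)
| gen_A : gen genA
| gen_B : gen genB
| gen_C : gen genC
| gen_D : gen genD
| gen_E (i j : nat) : (0 < i < n)%N -> (0 < j < p)%N -> gen (genE i j)
| gen_add s t : gen s -> gen t -> gen (s ++ t)
| gen_mul s t : gen s -> gen t -> gen (skmul s t).

Definition partSph (s : skew) : Prop := exists t, gen t /\ skeq t s.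

End Skew.

(* The generators of e'H_pe' act by a polynomial times a group element, except the
   operators of the second kind, which act by f^{w_i} plus c l times the divided difference
   (f^{w_i} - f)/(U_{i+1} - U_i), again a polynomial; so C[U] is stable and the order is
   principal.  For the Galois-ring conditions it suffices that every g in T x| S_n carries a
   monomial b g (b <> 0) of the subalgebra, since a g = (b g) g^{-1}(a/b) = (a/b) (b g).
   The g carrying a monomial form a monoid.  It contains every simple transposition w_i,
   because W_i (U_{i+1} - U_i) + c l = -(U_{i+1} - U_i + c l) w_i, hence all of S_n; and it
   contains the translations by +-l e_j (the third and fourth generators composed with
   cyclic permutations) and by +-(l/p)(e_1 + ... + e_n) (the fifth and sixth), which
   generate T. *)

From Pilot Require Import Defs.
From HB Require Import structures.
From mathcomp Require Import all_boot all_order all_algebra all_fingroup.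
From mathcomp Require Import generic_quotient fraction mpoly complex Rstruct.
(* fingroup's [act] would otherwise shadow [Defs.act]. *)
Import Defs.

Set Implicit Arguments.
Unset Strict Implicit.
Unset Printing Implicit Defensive.
Import GRing.Theory.
Local Open Scope ring_scope.

Lemma tofrac_repr (R : idomainType) (x : {fraction R}) :
  x = (\n_(repr x))%:F / (\d_(repr x))%:F.
Proof.
rewrite -[x in LHS]reprK; case: (repr x) => [[a b] /= b0].
unlock tofrac; rewrite !piE; apply/eqmodP.
rewrite /= FracField.equivfE /FracField.mulf /FracField.invf /=.
by rewrite !numden_Ratio ?mul1r ?oner_neq0 //= mulr1 mulrC.
Qed.

Lemma fracP (R : idomainType) (x : {fraction R}) :
  exists a b : R, b != 0 /\ x = a%:F / b%:F.
Proof. by exists \n_(repr x), \d_(repr x); split; [case: (repr x)|apply: tofrac_repr]. Qed.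

Lemma tofrac_addf (R : idomainType) (a b c d : R) : b != 0 -> d != 0 ->
  a%:F / b%:F + c%:F / d%:F = (a * d + c * b)%:F / (b * d)%:F.
Proof. by move=> b0 d0; rewrite addf_div ?tofrac_eq0 // tofracD !tofracM. Qed.

Lemma tofrac_mulf (R : idomainType) (a b c d : R) :
  a%:F / b%:F * (c%:F / d%:F) = (a * c)%:F / (b * d)%:F.
Proof. by rewrite mulf_div !tofracM. Qed.

Lemma comp_mpoly_comp (R : comNzRingType) n k j (q : {mpoly R[n]})
    (lq : n.-tuple {mpoly R[k]}) (lr : k.-tuple {mpoly R[j]}) :
  (q \mPo lq) \mPo lr = q \mPo [tuple (tnth lq i \mPo lr) | i < n].
Proof.
rewrite (comp_mpolyEX q lq) (comp_mpolyEX q) raddf_sum /=.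
apply: eq_bigr => m _; rewrite comp_mpolyZ; congr (_ *: _).
rewrite !comp_mpolyX rmorph_prod /=; apply: eq_bigr => i _.
by rewrite rmorphXn /= tnth_mktuple.
Qed.

Section GroupLaw.
Variable n : nat.
Implicit Types g h k : grp n.

Definition ginv g : grp n := ((g.1^-1)%g, [ffun j => - g.2 ((g.1^-1)%g j)]).

Lemma gmulA g h k : gmul g (gmul h k) = gmul (gmul g h) k.
Proof.
congr (_, _); first by rewrite /= mulgA.
by apply/ffunP => j; rewrite !ffunE permM addrA.
Qed.

Lemma gmul1g g : gmul (gone n) g = g.
Proof.
case: g => s t; congr (_, _); first by rewrite /= mulg1.
by apply/ffunP => j; rewrite !ffunE add0r.
Qed.

Lemma gmulg1 g : gmul g (gone n) = g.
Proof.
case: g => s t; congr (_, _); first by rewrite /= mul1g.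
by apply/ffunP => j; rewrite !ffunE perm1 addr0.
Qed.

Lemma gmulVg g : gmul (ginv g) g = gone n.
Proof.
congr (_, _); first by rewrite /= mulgV.
by apply/ffunP => j; rewrite !ffunE permK addNr.
Qed.

Lemma gmulgV g : gmul g (ginv g) = gone n.
Proof.
congr (_, _); first by rewrite /= mulVg.
by apply/ffunP => j; rewrite !ffunE addrN.
Qed.

Lemma ginv1 : ginv (gone n) = gone n.
Proof.
congr (_, _); first by rewrite /= invg1.
by apply/ffunP => j; rewrite !ffunE oppr0.
Qed.

Lemma gmul_eqVl g h k : (gmul g h == k) = (h == gmul (ginv g) k).
Proof.
apply/eqP/eqP => [<-|->]; first by rewrite gmulA gmulVg gmul1g.
by rewrite gmulA gmulgV gmul1g.
Qed.

End GroupLaw.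

Section Action.
Variables (n : nat) (hb : CC).
Local Notation psub := (psub hb).
Local Notation act := (act hb).
Implicit Types (g h : grp n) (x y : KK n).

Lemma psubD g : {morph psub g : q r / q + r}.
Proof. exact: raddfD. Qed.

Lemma psubM g : {morph psub g : q r / q * r}.
Proof. exact: rmorphM. Qed.

Lemma psub_comp g h q : psub g (psub h q) = psub (gmul g h) q.
Proof.
rewrite /Defs.psub comp_mpoly_comp; congr (q \mPo _).
apply: eq_from_tnth => i; rewrite !tnth_mktuple.
rewrite raddfD /= comp_mpolyXU comp_mpolyC -tnth_nth tnth_mktuple.
by rewrite ffunE permM -addrA -mpolyCD intrD mulrDr.
Qed.

Lemma psub1g q : psub (gone n) q = q.
Proof.
rewrite /Defs.psub -[RHS]comp_mpoly_id; congr (q \mPo _).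
by apply: eq_from_tnth => i; rewrite !tnth_mktuple ffunE perm1 mulr0 addr0.
Qed.

Lemma psub_eq0 g q : (psub g q == 0) = (q == 0).
Proof.
have psub0 h : psub h 0 = 0 by exact: comp_mpoly0.
apply/eqP/eqP => [e|->]; last exact: psub0.
by rewrite -[q]psub1g -(gmulVg g) -psub_comp e psub0.
Qed.

Lemma act_frac g (a b : {mpoly CC[n]}) : b != 0 ->
  act g (a%:F / b%:F) = (psub g a)%:F / (psub g b)%:F.
Proof.
rewrite /Defs.act; set x := a%:F / b%:F => b0.
have d0 : \d_(repr x) != 0 by case: (repr x).
have cross : a * \d_(repr x) = b * \n_(repr x).
  apply/eqP; rewrite -tofrac_eq !tofracM [b%:F * _]mulrC.
  by rewrite -eqr_div ?tofrac_eq0 // -tofrac_repr.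
apply/eqP; rewrite eqr_div; [|by rewrite tofrac_eq0 psub_eq0..].
rewrite -[X in X == _]tofracM -[X in _ == X]tofracM tofrac_eq.
by rewrite -[X in X == _]psubM -[X in _ == X]psubM cross [b * _]mulrC.
Qed.

Lemma act_tofrac g (a : {mpoly CC[n]}) : act g a%:F = (psub g a)%:F.
Proof.
have := @act_frac g a 1 (oner_neq0 _).
by rewrite tofrac1 divr1 /Defs.psub comp_mpoly1 tofrac1 divr1.
Qed.

Lemma act0 g : act g 0 = 0.
Proof. by rewrite -tofrac0 act_tofrac /Defs.psub comp_mpoly0. Qed.

Lemma actD g : {morph act g : x y / x + y}.
Proof.
move=> x y; have [a [b [b0 ->]]] := fracP x; have [c [d [d0 ->]]] := fracP y.
rewrite tofrac_addf // !act_frac ?mulf_neq0 // psubD !psubM.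
by rewrite tofrac_addf // psub_eq0.
Qed.

Lemma actM g : {morph act g : x y / x * y}.
Proof.
move=> x y; have [a [b [b0 ->]]] := fracP x; have [c [d [d0 ->]]] := fracP y.
by rewrite tofrac_mulf !act_frac ?mulf_neq0 // !psubM tofrac_mulf.
Qed.

Lemma act_sum g (I : Type) (r : seq I) (P : pred I) (F : I -> KK n) :
  act g (\sum_(i <- r | P i) F i) = \sum_(i <- r | P i) act g (F i).
Proof. exact: (big_morph _ (actD g) (act0 g)). Qed.

Lemma act_comp g h x : act g (act h x) = act (gmul g h) x.
Proof.
have [a [b [b0 ->]]] := fracP x.
have hb0 : psub h b != 0 by rewrite psub_eq0.
rewrite (act_frac h a b0) (act_frac g _ hb0) (act_frac _ a b0).
exact: (congr2 (fun u v => u%:F / v%:F) (psub_comp g h a) (psub_comp g h b)).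
Qed.

Lemma act1g x : act (gone n) x = x.
Proof. by have [a [b [b0 ->]]] := fracP x; rewrite (act_frac _ a b0) !psub1g. Qed.

Lemma actKV g x : act g (act (ginv g) x) = x.
Proof. by rewrite act_comp gmulgV act1g. Qed.

Lemma act_eq0 g x : (act g x == 0) = (x == 0).
Proof.
apply/eqP/eqP => [e|->]; last exact: act0.
by rewrite -[x]act1g -(gmulVg g) -act_comp e act0.
Qed.

End Action.

Lemma big_pred1_uniq (T : eqType) (R : nmodType) (r : seq T) (a : T) (F : T -> R) :
  uniq r -> a \in r -> \sum_(g <- r | a == g) F g = F a.
Proof.
move=> ur ar; rewrite (big_rem a) //= eqxx big1_seq ?addr0 // => g /andP[/eqP <-].
by rewrite (mem_rem_uniq _ ur) inE eqxx.
Qed.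

Section SkewRing.
Variables (n : nat) (hb : CC).
Local Notation act := (act hb).
Local Notation skmul := (skmul hb).
Local Notation skeval := (skeval hb).
Implicit Types (g h : grp n) (s t : skew n) (a b : KK n).

Lemma coefK_nil g : coefK [::] g = 0.
Proof. exact: big_nil. Qed.

Lemma coefK_cons x s g :
  coefK (x :: s) g = (if x.2 == g then x.1 else 0) + coefK s g.
Proof. by rewrite /coefK big_cons; case: ifP; rewrite ?add0r. Qed.

Lemma coefK_single a h g : coefK [:: (a, h)] g = if h == g then a else 0.
Proof. by rewrite coefK_cons coefK_nil addr0. Qed.

Lemma coefK_cat s t g : coefK (s ++ t) g = coefK s g + coefK t g.
Proof. exact: big_cat. Qed.

Lemma coefK_flatten (r : seq (skew n)) g :
  coefK (flatten r) g = \sum_(s <- r) coefK s g.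
Proof.
elim: r => [|s r IHr]; first by rewrite big_nil coefK_nil.
by rewrite /= coefK_cat IHr big_cons.
Qed.

Lemma coefK_neq0_mem s g : coefK s g != 0 -> exists2 x, x \in s & x.2 = g.
Proof.
have [/hasP[x xs /eqP xg] _|/hasPn sg] := boolP (has (fun x => x.2 == g) s).
  by exists x.
by rewrite /coefK big1_seq ?eqxx // => x /andP[xg /sg]; rewrite xg.
Qed.

Lemma skeq_sym s t : skeq s t -> skeq t s.
Proof. by move=> st g; rewrite st. Qed.

Lemma skeq_cat s s' t t' : skeq s s' -> skeq t t' -> skeq (s ++ t) (s' ++ t').
Proof. by move=> e1 e2 g; rewrite !coefK_cat e1 e2. Qed.

Lemma skeq_coefK s :
  skeq s (flatten [seq [:: (coefK s g, g)] | g <- undup (map snd s)]).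
Proof.
move=> h; rewrite coefK_flatten big_map.
under eq_bigr => g _ do rewrite coefK_single.
rewrite -big_mkcond /=.
have [hs|hNs] := boolP (h \in undup (map snd s)).
  under eq_bigl => g do rewrite eq_sym.
  by rewrite big_pred1_uniq ?undup_uniq.
rewrite big1_seq => [|g /andP[/eqP -> gs]]; last by rewrite gs in hNs.
apply/eqP; apply: contraNT hNs => /coefK_neq0_mem[x xs <-].
by rewrite mem_undup map_f.
Qed.

Lemma big_coefK (F : grp n -> KK n) s (r : seq (grp n)) :
  uniq r -> {subset map snd s <= r} ->
  \sum_(x <- s) x.1 * F x.2 = \sum_(g <- r) coefK s g * F g.
Proof.
move=> ur; elim: s => [|x s IHs] sr.
  by rewrite big_nil big1 // => g _; rewrite coefK_nil mul0r.
rewrite big_cons IHs => [|g gs]; last by apply: sr; rewrite inE gs orbT.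
under [in RHS]eq_bigr => g _ do rewrite coefK_cons mulrDl.
rewrite big_split /= -[x.1 * _]/((fun g => x.1 * F g) x.2); congr (_ + _).
rewrite (eq_bigr (fun g => if x.2 == g then x.1 * F g else 0)) => [|g _]; last first.
  by case: ifP; rewrite ?mul0r.
by rewrite -big_mkcond big_pred1_uniq //= sr // inE eqxx.
Qed.

Lemma big_skeq (F : grp n -> KK n) s t : skeq s t ->
  \sum_(x <- s) x.1 * F x.2 = \sum_(x <- t) x.1 * F x.2.
Proof.
move=> st; have ur := undup_uniq (map snd (s ++ t)).
rewrite !(big_coefK F ur) => [|g|g]; first by apply: eq_bigr => g _; rewrite st.
- by rewrite mem_undup map_cat mem_cat => ->; rewrite orbT.
- by rewrite mem_undup map_cat mem_cat => ->.
Qed.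

Lemma coefK_skmul s t g :
  coefK (skmul s t) g = \sum_(x <- s) x.1 * act x.2 (coefK t (gmul (ginv x.2) g)).
Proof.
rewrite /coefK /Defs.skmul big_mkcond big_allpairs_dep /=.
apply: eq_bigr => x _; rewrite act_sum big_distrr /= [RHS]big_mkcond /=.
apply: eq_bigr => y _; rewrite gmul_eqVl.
by case: ifP; rewrite ?act0 ?mulr0.
Qed.

Lemma coefK_skmul_kelt s a g : coefK (skmul s (kelt a)) g = coefK s g * act g a.
Proof.
rewrite coefK_skmul.
under eq_bigr => x _ do rewrite coefK_single -gmul_eqVl gmulg1.
rewrite /coefK big_distrl /= [RHS]big_mkcond /=; apply: eq_bigr => x _.
by case: eqP => [->|_]; rewrite ?act0 ?mulr0 ?mul0r.
Qed.

Lemma coefK_kelt_skmul s a g : coefK (skmul (kelt a) s) g = a * coefK s g.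
Proof. by rewrite coefK_skmul big_cons big_nil addr0 /= ginv1 gmul1g act1g. Qed.

Lemma skmul_skeq s s' t t' : skeq s s' -> skeq t t' -> skeq (skmul s t) (skmul s' t').
Proof.
move=> e1 e2 g; rewrite !coefK_skmul.
rewrite (big_skeq (fun h => act h (coefK t (gmul (ginv h) g))) e1).
by apply: eq_bigr => x _; rewrite e2.
Qed.

Lemma skeq_keltD a b : skeq (kelt a ++ kelt b) (kelt (a + b)).
Proof. by move=> g; rewrite coefK_cat !coefK_single; case: ifP; rewrite ?addr0. Qed.

Lemma skeq_keltM a b : skeq (skmul (kelt a) (kelt b)) (kelt (a * b)).
Proof. by move=> g; rewrite coefK_kelt_skmul !coefK_single; case: ifP; rewrite ?mulr0. Qed.

Lemma skeval_skeq s t f : skeq s t -> skeval s f = skeval t f.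
Proof. exact: (big_skeq (fun h => act h f)). Qed.

Lemma skeval_cat s t f : skeval (s ++ t) f = skeval s f + skeval t f.
Proof. exact: big_cat. Qed.

Lemma skeval_skmul s t f : skeval (skmul s t) f = skeval s (skeval t f).
Proof.
rewrite /Defs.skeval /Defs.skmul big_allpairs_dep /=.
apply: eq_bigr => x _; rewrite act_sum big_distrr /=.
by apply: eq_bigr => y _; rewrite actM act_comp mulrA.
Qed.

Section Support.
Variables l p : nat.

Lemma inKK_skeq s t : skeq s t -> inKK l p t -> inKK l p s.
Proof. by move=> st Tt g; rewrite st; apply: Tt. Qed.

Lemma inKK_nil : inKK l p ([::] : skew n).
Proof. by move=> g; rewrite coefK_nil eqxx. Qed.

Lemma inKK_cat s t : inKK l p s -> inKK l p t -> inKK l p (s ++ t).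
Proof.
move=> Ts Tt g; rewrite coefK_cat; have [s0|/Ts Tg _] := eqVneq (coefK s g) 0.
  by rewrite s0 add0r; apply: Tt.
exact: Tg.
Qed.

Lemma inKK_skmul_kelt s a : inKK l p s -> inKK l p (skmul s (kelt a)).
Proof. by move=> Ts g; rewrite coefK_skmul_kelt mulf_eq0 negb_or => /andP[/Ts]. Qed.

Lemma inKK_kelt_skmul s a : inKK l p s -> inKK l p (skmul (kelt a) s).
Proof. by move=> Ts g; rewrite coefK_kelt_skmul mulf_eq0 negb_or => /andP[_ /Ts]. Qed.

Lemma inKK_ind (V : skew n -> Prop) :
    V [::] -> (forall s t, V s -> V t -> V (s ++ t)) ->
    (forall s t, skeq s t -> V s -> V t) ->
    (forall a g, inT l p g.2 -> V [:: (a, g)]) ->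
  forall s, inKK l p s -> V s.
Proof.
move=> V0 VD Veq V1 s Ts; apply: (Veq _ _ (skeq_sym (skeq_coefK s))).
elim: (undup (map snd s)) => [|g r IHr]; first exact: V0.
apply: (VD _ _ _ IHr).
have [s0|/Ts] := eqVneq (coefK s g) 0; last exact: V1.
by apply: (Veq _ _ _ V0) => h; rewrite coefK_nil coefK_single s0; case: ifP.
Qed.

End Support.

End SkewRing.

Section Divisibility.
Variable R : comNzRingType.
Implicit Types d x y : R.

Definition rdvd d x := exists q, x = d * q.

Lemma rdvd0 d : rdvd d 0.
Proof. by exists 0; rewrite mulr0. Qed.

Lemma rdvdD d x y : rdvd d x -> rdvd d y -> rdvd d (x + y).
Proof. by move=> [a ->] [b ->]; exists (a + b); rewrite mulrDr. Qed.

Lemma rdvdMl d x y : rdvd d x -> rdvd d (y * x).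
Proof. by move=> [a ->]; exists (y * a); rewrite mulrCA. Qed.

Lemma rdvdMr d x y : rdvd d x -> rdvd d (x * y).
Proof. by rewrite mulrC; apply: rdvdMl. Qed.

Lemma rdvd_sum d (I : Type) (r : seq I) (F : I -> R) :
  (forall i, rdvd d (F i)) -> rdvd d (\sum_(i <- r) F i).
Proof. by move=> dF; elim/big_rec: _ => [|i x _]; [apply: rdvd0|apply: rdvdD]. Qed.

Lemma rdvd_subprod d (I : Type) (r : seq I) (F G : I -> R) :
  (forall i, rdvd d (F i - G i)) ->
  rdvd d (\prod_(i <- r) F i - \prod_(i <- r) G i).
Proof.
move=> dFG; elim: r => [|i r IHr]; first by rewrite !big_nil subrr; apply: rdvd0.
rewrite !big_cons.
have -> : F i * \prod_(j <- r) F j - G i * \prod_(j <- r) G j =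
    (F i - G i) * \prod_(j <- r) F j + G i * (\prod_(j <- r) F j - \prod_(j <- r) G j).
  by rewrite mulrBl mulrBr addrA addrNK.
by apply: rdvdD; [apply: rdvdMr|apply: rdvdMl].
Qed.

Lemma rdvd_subX d x y k : rdvd d (x - y) -> rdvd d (x ^+ k - y ^+ k).
Proof.
by move=> dxy; rewrite -[k]subn0 -!prodr_const_nat; apply: rdvd_subprod.
Qed.

End Divisibility.

Lemma rdvd_comp_mpoly (R : comNzRingType) n k (d : {mpoly R[k]}) (f : {mpoly R[n]})
    (t t' : n.-tuple {mpoly R[k]}) :
  (forall i, rdvd d (tnth t i - tnth t' i)) -> rdvd d ((f \mPo t) - (f \mPo t')).
Proof.
move=> dtt'; rewrite (comp_mpolyEX f t) (comp_mpolyEX f t') -sumrB.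
apply: rdvd_sum => m; rewrite -scalerBr !comp_mpolyX -mul_mpolyC.
by apply/rdvdMl/rdvd_subprod => i; apply: rdvd_subX.
Qed.

Section LinearForms.
Variable n : nat.

Lemma X_add_neq0 (j : 'I_n) (q : {mpoly CC[n]}) : q@_U_(j) = 0 -> 'X_j + q != 0.
Proof.
move=> qj; apply/eqP => /(congr1 (mcoeff U_(j))).
by rewrite mcoeffD mcoeffXU eqxx qj addr0 mcoeff0 => /eqP; rewrite oner_eq0.
Qed.

Lemma linear_neq0 (i : 'I_n) (y z : CC) : Uf i + cst n y - cst n z != 0.
Proof.
rewrite -tofracD -tofracB -addrA -mpolyCB tofrac_eq0 X_add_neq0 //.
by rewrite mcoeffC mnm1_eq0 mulr0.
Qed.

Lemma Uf_sub_neq0 (i j : 'I_n) : i != j -> Uf j - Uf i != 0.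
Proof.
move=> ij; rewrite -tofracB tofrac_eq0 X_add_neq0 //.
by rewrite mcoeffN mcoeffXU (negbTE ij) mulr0n oppr0.
Qed.

Lemma Uf_sub_add_neq0 (i j : 'I_n) (y : CC) : i != j -> Uf j - Uf i + cst n y != 0.
Proof.
move=> ij; rewrite -tofracB -tofracD -addrA tofrac_eq0 X_add_neq0 //.
by rewrite mcoeffD mcoeffN mcoeffXU mcoeffC mnm1_eq0 (negbTE ij) mulr0 mulr0n oppr0 addr0.
Qed.

End LinearForms.

Section PartiallySpherical.
Variables (n : nat) (hb : CC) (l p : nat) (c : CC) (cm : nat -> CC).
Local Notation act := (act hb).
Local Notation skmul := (skmul hb).
Local Notation skeval := (skeval hb).
Local Notation U := (partSph hb l p c cm).
Local Notation gen := (gen hb l p c cm).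
Implicit Types (g h : grp n) (s t : skew n) (a b : KK n).

Lemma partSph_gen t : gen t -> U t.
Proof. by exists t. Qed.

Lemma partSph_skeq s t : skeq s t -> U s -> U t.
Proof. by move=> st [u [gu us]]; exists u; split=> // g; rewrite us st. Qed.

Lemma partSph_cat s t : U s -> U t -> U (s ++ t).
Proof.
move=> [u [gu us]] [v [gv vt]]; exists (u ++ v).
by split; [apply: gen_add|apply: skeq_cat].
Qed.

Lemma partSph_skmul s t : U s -> U t -> U (skmul s t).
Proof.
move=> [u [gu us]] [v [gv vt]]; exists (skmul u v).
by split; [apply: gen_mul|apply: skmul_skeq].
Qed.

Lemma partSph_keltD a b : U (kelt a) -> U (kelt b) -> U (kelt (a + b)).
Proof. by move=> Ua Ub; apply: partSph_skeq (skeq_keltD a b) (partSph_cat Ua Ub). Qed.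

Lemma partSph_keltM a b : U (kelt a) -> U (kelt b) -> U (kelt (a * b)).
Proof. by move=> Ua Ub; apply: partSph_skeq (skeq_keltM _ a b) (partSph_skmul Ua Ub). Qed.

Lemma partSph_cst x : U (kelt (cst n x)).
Proof. exact/partSph_gen/gen_scal. Qed.

Lemma partSph_tofrac (f : {mpoly CC[n]}) : U (kelt f%:F).
Proof.
have := partSph_cst 1; rewrite /cst mpolyC1 tofrac1 => U1.
elim/mpolyind: f => [|a m f _ _ IHf].
  by have := partSph_cst 0; rewrite /cst mpolyC0 => ?.
rewrite tofracD -mul_mpolyC tofracM mpolyXE_id rmorph_prod /=.
apply/partSph_keltD/IHf/partSph_keltM; first exact: partSph_cst.
apply: (big_ind (fun b => U (kelt b))) => [|a1 a2|i _]; first exact: U1.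
  exact: partSph_keltM.
rewrite rmorphXn; elim: (m i) => [|k IHk]; first by rewrite expr0.
by rewrite exprS; apply/partSph_keltM/IHk/partSph_gen/gen_U.
Qed.

Lemma inT_gone : inT l p (gone n).2.
Proof. by exists 0, (fun=> 0) => j; rewrite ffunE !mul0r addr0. Qed.

Lemma inT_gmul g h : inT l p g.2 -> inT l p h.2 -> inT l p (gmul g h).2.
Proof.
move=> [k [a Ta]] [k' [a' Ta']]; exists (k + k'), (fun j => a (h.1 j) + a' j) => j.
by rewrite ffunE Ta Ta' !mulrDl addrACA.
Qed.

Lemma gen_inT t : gen t -> forall x, x \in t -> inT l p x.2.2.
Proof.
elim=> {t} [a|i|i i1 _|||||i j _ _|s t _ Ts _ Tt|s t _ Ts _ Tt] x.
- by rewrite inE => /eqP->; apply: inT_gone.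
- by rewrite inE => /eqP->; apply: inT_gone.
- rewrite !inE => /orP[]/eqP-> /=; last exact: inT_gone.
  by exists 0, (fun=> 0) => j; rewrite ffunE !mul0r addr0.
- rewrite inE => /eqP-> /=; exists 0, (fun j : 'I_n => (val j == n.-1)%:R) => j.
  by rewrite ffunE mul0r addr0; case: eqP; rewrite ?mul1r ?mul0r.
- rewrite inE => /eqP-> /=; exists 0, (fun j : 'I_n => - (val j == 0%N)%:R) => j.
  by rewrite ffunE mul0r addr0; case: eqP; rewrite ?mulN1r ?oppr0 ?mul0r.
- by rewrite inE => /eqP-> /=; exists 1, (fun=> 0) => j; rewrite ffunE mul0r add0r mul1r.
- by rewrite inE => /eqP-> /=; exists (-1), (fun=> 0) => j; rewrite ffunE mul0r add0r mulN1r.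
- rewrite inE => /eqP-> /=.
  exists j%:Z, (fun k : 'I_n => - (k < n - i)%N%:R) => k.
  by rewrite ffunE PoszM addrC; case: ifP; rewrite ?mulN1r ?oppr0 ?mul0r ?subr0.
- by rewrite mem_cat => /orP[]; [apply: Ts|apply: Tt].
- by move=> /allpairsPdep[y [z [ys zt ->]]]; apply: inT_gmul (Ts _ ys) (Tt _ zt).
Qed.

Lemma partSph_inKK s : U s -> inKK l p s.
Proof.
move=> [t [gt ts]] g; rewrite -ts => /coefK_neq0_mem[x xt <-].
exact: gen_inT gt x xt.
Qed.

Definition polyfrac (x : KK n) := exists q : {mpoly CC[n]}, x = q%:F.

Lemma polyfrac_tofrac (q : {mpoly CC[n]}) : polyfrac q%:F.
Proof. by exists q. Qed.

Lemma polyfrac0 : polyfrac 0.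
Proof. by exists 0; rewrite tofrac0. Qed.

Lemma polyfracD x y : polyfrac x -> polyfrac y -> polyfrac (x + y).
Proof. by move=> [a ->] [b ->]; exists (a + b); rewrite tofracD. Qed.

Lemma polyfracN x : polyfrac x -> polyfrac (- x).
Proof. by move=> [a ->]; exists (- a); rewrite tofracN. Qed.

Lemma polyfracM x y : polyfrac x -> polyfrac y -> polyfrac (x * y).
Proof. by move=> [a ->] [b ->]; exists (a * b); rewrite tofracM. Qed.

Lemma polyfrac_prod (I : Type) (r : seq I) (P : pred I) (F : I -> KK n) :
  (forall i, polyfrac (F i)) -> polyfrac (\prod_(i <- r | P i) F i).
Proof.
move=> PF; elim/big_rec: _ => [|i x _]; last exact: polyfracM.
by exists 1; rewrite tofrac1.
Qed.

Lemma polyfrac_act g x : polyfrac x -> polyfrac (act g x).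
Proof. by move=> [a ->]; rewrite act_tofrac; apply: polyfrac_tofrac. Qed.

Lemma polyfrac_linear (i : 'I_n) (y z : CC) : polyfrac (Uf i + cst n y - cst n z).
Proof. by apply/polyfracD/polyfracN/polyfrac_tofrac/polyfracD; apply: polyfrac_tofrac. Qed.

Lemma polyfrac_skeval1 a g x :
  polyfrac a -> polyfrac x -> polyfrac (skeval [:: (a, g)] x).
Proof. by rewrite /Defs.skeval big_seq1 => Pa Px; apply/polyfracM/polyfrac_act. Qed.

Lemma rdvd_psub_tperm (i j : 'I_n) (f : {mpoly CC[n]}) :
  rdvd ('X_j - 'X_i) (psub hb (tperm i j, [ffun=> 0]) f - f).
Proof.
rewrite /Defs.psub -[X in rdvd _ (_ - X)]comp_mpoly_id; apply: rdvd_comp_mpoly => k.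
rewrite !tnth_mktuple ffunE /= mulr0 addr0.
case: tpermP => [->|->|_ _]; last by rewrite subrr; apply: rdvd0.
  by exists 1; rewrite mulr1.
by exists (-1); rewrite mulrN1 opprB.
Qed.

Lemma polyfrac_genW (i i1 : 'I_n) x : val i1 = (val i).+1 ->
  polyfrac x -> polyfrac (skeval (genW l c i i1) x).
Proof.
move=> i1E [f ->]; have ii1 : i != i1 by apply/eqP => ii1; move: i1E; rewrite ii1 => /n_Sn.
rewrite /genW /Defs.skeval big_cons big_seq1 act1g act_tofrac.
have [q] := rdvd_psub_tperm i i1 f.
move: (psub _ _ f) (Uf_sub_neq0 ii1) => w d0 fE.
have -> : (1 + cst n (c * l%:R) / (Uf i1 - Uf i)) * w%:F
          + - (cst n (c * l%:R) / (Uf i1 - Uf i)) * f%:F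
        = w%:F + cst n (c * l%:R) * ((w - f)%:F / (Uf i1 - Uf i)).
  by rewrite tofracB mulrDl mul1r mulNr -addrA -mulrBr mulrAC mulrA.
rewrite fE tofracM tofracB -/(Uf i1) -/(Uf i) mulrAC (divff d0) mul1r.
by apply/polyfracD/polyfracM; apply: polyfrac_tofrac.
Qed.

Lemma gen_polyfrac t : gen t -> forall x, polyfrac x -> polyfrac (skeval t x).
Proof.
elim=> {t} [a|i|i i1 i1E|||||i j _ _|s t _ Ps _ Pt|s t _ Ps _ Pt] x Px.
- exact/polyfrac_skeval1/Px/polyfrac_tofrac.
- exact/polyfrac_skeval1/Px/polyfrac_tofrac.
- exact: polyfrac_genW.
- apply/polyfrac_skeval1/Px/polyfrac_prod => m.
  rewrite /Uv; case: insub => [i|]; first exact: polyfrac_linear.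
  by apply/polyfracD/polyfracN/polyfrac_tofrac/polyfracD/polyfrac_tofrac/polyfrac0.
- by apply/polyfrac_skeval1/Px; exists 1; rewrite tofrac1.
- apply/polyfrac_skeval1/Px/polyfrac_prod => i.
  by apply/polyfrac_prod => m; apply: polyfrac_linear.
- by apply/polyfrac_skeval1/Px; exists 1; rewrite tofrac1.
- apply/polyfrac_skeval1/Px/polyfrac_prod => r.
  by apply/polyfrac_prod => m; apply: polyfrac_linear.
- by rewrite skeval_cat; apply: polyfracD; [apply: Ps|apply: Pt].
- by rewrite skeval_skmul; apply/Ps/Pt.
Qed.

Lemma partSph_principal s : U s ->
  forall f : {mpoly CC[n]}, exists q : {mpoly CC[n]}, skeval s f%:F = q%:F.
Proof.
move=> [t [gt ts]] f; rewrite -(skeval_skeq _ _ ts).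
exact: gen_polyfrac gt _ (polyfrac_tofrac f).
Qed.

Lemma UK_inKK s : UK hb U s -> inKK l p s.
Proof.
move=> [r [Ur /inKK_skeq]]; apply; elim: r Ur => [|u r IHr] Ur; first exact: inKK_nil.
apply: inKK_cat; last by apply: IHr => v rv; apply: Ur; right.
by apply/inKK_skmul_kelt/partSph_inKK/Ur; left.
Qed.

Lemma KU_inKK s : KU hb U s -> inKK l p s.
Proof.
move=> [r [Ur /inKK_skeq]]; apply; elim: r Ur => [|u r IHr] Ur; first exact: inKK_nil.
apply: inKK_cat; last by apply: IHr => v rv; apply: Ur; right.
by apply/inKK_kelt_skmul/partSph_inKK/Ur; left.
Qed.

Definition has_monomial g := exists2 b, b != 0 & U [:: (b, g)].

Lemma UK_monomial g a : has_monomial g -> UK hb U [:: (a, g)].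
Proof.
move=> [b b0 Ub]; exists [:: ([:: (b, g)], act (ginv g) (a / b))].
split=> [_ [<- //|//]|h].
rewrite coefK_flatten big_map big_seq1 coefK_skmul_kelt !coefK_single.
by case: eqP => [<-|_]; rewrite ?mul0r // actKV mulrC divfK.
Qed.

Lemma KU_monomial g a : has_monomial g -> KU hb U [:: (a, g)].
Proof.
move=> [b b0 Ub]; exists [:: (a / b, [:: (b, g)])].
split=> [_ [<- //|//]|h].
rewrite coefK_flatten big_map big_seq1 coefK_kelt_skmul !coefK_single.
by case: eqP => _; rewrite ?mulr0 ?divfK.
Qed.

Lemma inKK_UK s :
  (forall g, inT l p g.2 -> has_monomial g) -> inKK l p s -> UK hb U s.
Proof.
move=> Tmon; apply: inKK_ind => [|s1 s2|s1 s2 s12|a g /Tmon/UK_monomial //].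
- by exists [::].
- move=> [r1 [Ur1 e1]] [r2 [Ur2 e2]]; exists (r1 ++ r2); split.
    by move=> u /(List.in_app_or r1 r2 u)[/Ur1|/Ur2].
  by rewrite map_cat flatten_cat; apply: skeq_cat.
- by move=> [r [Ur e]]; exists r; split=> // g; rewrite -s12.
Qed.

Lemma inKK_KU s :
  (forall g, inT l p g.2 -> has_monomial g) -> inKK l p s -> KU hb U s.
Proof.
move=> Tmon; apply: inKK_ind => [|s1 s2|s1 s2 s12|a g /Tmon/KU_monomial //].
- by exists [::].
- move=> [r1 [Ur1 e1]] [r2 [Ur2 e2]]; exists (r1 ++ r2); split.
    by move=> u /(List.in_app_or r1 r2 u)[/Ur1|/Ur2].
  by rewrite map_cat flatten_cat; apply: skeq_cat.
- by move=> [r [Ur e]]; exists r; split=> // g; rewrite -s12.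
Qed.

Lemma has_monomial_gmul g h :
  has_monomial g -> has_monomial h -> has_monomial (gmul g h).
Proof.
move=> [b b0 Ub] [b' b0' Ub']; exists (b * act g b'); last exact: partSph_skmul Ub Ub'.
by apply: mulf_neq0 b0 _; rewrite act_eq0.
Qed.

Lemma has_monomial_gone : has_monomial (gone n).
Proof. by exists 1; [apply: oner_neq0|have := partSph_tofrac 1; rewrite tofrac1]. Qed.

Lemma has_monomial_gen x : gen [:: x] -> x.1 != 0 -> has_monomial x.2.
Proof. by case: x => b g gbg b0; exists b => //; apply: partSph_gen. Qed.

Definition gperm (s : {perm 'I_n}) : grp n := (s, [ffun=> 0]).
Definition gtrans (t : {ffun 'I_n -> int}) : grp n := (1%g, t).

Lemma gmul_gperm (s s' : {perm 'I_n}) : gmul (gperm s) (gperm s') = gperm (s' * s).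
Proof. by congr (_, _); apply/ffunP => j; rewrite !ffunE addr0. Qed.

Lemma gmul_gtrans (t t' : {ffun 'I_n -> int}) :
  gmul (gtrans t) (gtrans t') = gtrans (t + t').
Proof. by congr (_, _); [rewrite /= mulg1|apply/ffunP => j; rewrite !ffunE perm1]. Qed.

Lemma gmul_gperm_gtrans (s : {perm 'I_n}) (t : {ffun 'I_n -> int}) :
  gmul (gperm s) (gtrans t) = (s, t).
Proof. by congr (_, _); [rewrite /= mul1g|apply/ffunP => j; rewrite !ffunE add0r]. Qed.

Lemma gconj_gtrans (s : {perm 'I_n}) (t : {ffun 'I_n -> int}) :
  gmul (gperm (s^-1)%g) (gmul (gtrans t) (gperm s)) = gtrans [ffun j => t (s j)].
Proof.
by congr (_, _); [rewrite /= mulg1 mulgV|apply/ffunP => j; rewrite !ffunE addr0 add0r].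
Qed.

Lemma has_monomial_gpermM (s s' : {perm 'I_n}) :
  has_monomial (gperm s) -> has_monomial (gperm s') -> has_monomial (gperm (s * s')).
Proof. by move=> Ms Ms'; rewrite -gmul_gperm; apply: has_monomial_gmul. Qed.

(* [W k + cl] is [(1 + cl/k) w(k) w]: the identity components cancel. *)
Lemma has_monomial_divided_difference (w : grp n) (k cl : KK n) :
    w != gone n -> k != 0 -> k + cl != 0 -> U (kelt k) -> U (kelt cl) ->
    U [:: (1 + cl / k, w); (- (cl / k), gone n)] ->
  has_monomial w.
Proof.
move=> w1 k0 kcl0 Uk Ucl UW; exists ((1 + cl / k) * act w k).
  apply: mulf_neq0; last by rewrite act_eq0; exact: k0.
  have -> : 1 + cl / k = (k + cl) / k by rewrite mulrDl (divff k0).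
  by apply: mulf_neq0 kcl0 _; rewrite invr_eq0; exact: k0.
apply: partSph_skeq (partSph_cat (partSph_skmul UW Uk) Ucl) => h.
rewrite coefK_cat coefK_skmul_kelt !coefK_cons !coefK_nil /= !addr0.
case: eqP => [<-|_]; first by rewrite [gone n == w]eq_sym (negbTE w1) !addr0.
case: eqP => [<-|_]; last by rewrite !addr0 mul0r.
by rewrite add0r act1g mulNr (divfK k0) addNr.
Qed.

Lemma has_monomial_W (i i1 : 'I_n) : val i1 = (val i).+1 ->
  has_monomial (gperm (tperm i i1)).
Proof.
move=> i1E; have ii1 : i != i1 by apply/eqP => ii1; move: i1E; rewrite ii1 => /n_Sn.
apply: (@has_monomial_divided_difference _ (Uf i1 - Uf i) (cst n (c * l%:R))).
- by apply: contra_neq ii1 => /(congr1 (fun g : grp n => g.1 i)); rewrite tpermL perm1.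
- exact: Uf_sub_neq0.
- exact: Uf_sub_add_neq0.
- by rewrite -tofracB; apply: partSph_tofrac.
- exact: partSph_cst.
- exact: partSph_gen (gen_W _ _ _ _ _ i1E).
Qed.

(* Induction on [y - x], conjugating (x z) by the adjacent transposition (z y). *)
Lemma has_monomial_tperm_dist d (x y : 'I_n) : val y = (val x + d)%N ->
  has_monomial (gperm (tperm x y)).
Proof.
elim: d x y => [|d IHd] x y yE.
  have -> : y = x by apply: val_inj; rewrite yE addn0.
  by rewrite tperm1; apply: has_monomial_gone.
have zn : (val x + d < n)%N by rewrite -addnS -yE; exact: ltnW (ltn_ord y).
pose z := Ordinal zn; have Mxz := IHd x z erefl.
have Mzy : has_monomial (gperm (tperm z y)) by apply: has_monomial_W; rewrite yE addnS.
have [->|xNz] := eqVneq x z; first exact: Mzy.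
have yNx : y != x by apply/eqP => yx; move: yE; rewrite yx -{1}[val x]addn0 => /addnI.
have <- : (tperm x z ^ tperm z y)%g = tperm x y by rewrite tpermJ tpermL tpermD // eq_sym.
rewrite /conjg tpermV.
by apply: has_monomial_gpermM => //; apply: has_monomial_gpermM.
Qed.

Lemma has_monomial_gperm (s : {perm 'I_n}) : has_monomial (gperm s).
Proof.
have [ts -> _] := prod_tpermP s.
elim/big_ind: _ => [|s1 s2|[x y] _]; first exact: has_monomial_gone.
  exact: has_monomial_gpermM.
wlog xy : x y / (val x <= val y)%N => [Hwlog|].
  have [xy|/ltnW yx] := leqP (val x) (val y); first exact: Hwlog xy.
  rewrite tpermC; exact: Hwlog yx.
by apply: (@has_monomial_tperm_dist (val y - val x)); rewrite subnKC.
Qed.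

Definition unitv (j : 'I_n) (v : int) : {ffun 'I_n -> int} :=
  [ffun k => if k == j then v else 0].

Lemma has_monomial_gtransD (t t' : {ffun 'I_n -> int}) :
  has_monomial (gtrans t) -> has_monomial (gtrans t') -> has_monomial (gtrans (t + t')).
Proof. by move=> Mt Mt'; rewrite -gmul_gtrans; apply: has_monomial_gmul. Qed.

Lemma has_monomial_gtrans_sum (I : Type) (r : seq I) (F : I -> {ffun 'I_n -> int}) :
  (forall i, has_monomial (gtrans (F i))) -> has_monomial (gtrans (\sum_(i <- r) F i)).
Proof.
move=> MF; elim/big_ind: _ => [|t t'|i _]; [exact: has_monomial_gone| |exact: MF].
exact: has_monomial_gtransD.
Qed.

Lemma has_monomial_gtransMz (t : {ffun 'I_n -> int}) z :
    has_monomial (gtrans t) -> has_monomial (gtrans (- t)) ->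
  has_monomial (gtrans (t *~ z)).
Proof.
have Mn u m : has_monomial (gtrans u) -> has_monomial (gtrans (u *+ m)).
  move=> Mu; elim: m => [|m IHm]; first exact: has_monomial_gone.
  by rewrite mulrS; apply: has_monomial_gtransD.
move=> Mt MNt; case: z => m; first by rewrite -pmulrn; apply: Mn.
by rewrite NegzE mulrNz -pmulrn -mulNrn; apply: Mn.
Qed.

Lemma has_monomial_gtrans_perm (s : {perm 'I_n}) (t : {ffun 'I_n -> int}) :
  has_monomial (gtrans t) -> has_monomial (gtrans [ffun j => t (s j)]).
Proof.
move=> Mt; rewrite -gconj_gtrans.
by apply/has_monomial_gmul/has_monomial_gmul/has_monomial_gperm => //; apply: has_monomial_gperm.
Qed.

Lemma has_monomial_unitv_move (j0 j : 'I_n) v :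
  has_monomial (gtrans (unitv j0 v)) -> has_monomial (gtrans (unitv j v)).
Proof.
move/(has_monomial_gtrans_perm (tperm j j0)); congr (has_monomial (gtrans _)).
apply/ffunP => k; rewrite !ffunE; congr (if _ then _ else _).
by case: tpermP => [->|->|/eqP/negPf-> /eqP/negPf->]; rewrite ?eqxx // eq_sym.
Qed.

Section Translations.
Hypothesis n_gt0 : (0 < n)%N.

(* [genA] followed by [cyc^-1] is the translation by [l] in coordinate [cyc (n-1)]. *)
Lemma has_monomial_unitv (j : 'I_n) : has_monomial (gtrans (unitv j l%:Z)).
Proof.
have x0n : (n.-1 < n)%N by rewrite ltn_predL.
pose x0 := Ordinal x0n; apply: (@has_monomial_unitv_move (cyc n x0)).
have MA : has_monomial (cyc n, [ffun k : 'I_n => if val k == n.-1 then l%:Z else 0]).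
  apply: (has_monomial_gen (gen_A n hb l p c cm)); rewrite prodf_seq_neq0.
  by apply/allP => m _ /=; rewrite /Uv insubT /=; apply: linear_neq0.
have := has_monomial_gmul MA (has_monomial_gperm ((cyc n)^-1)%g).
congr has_monomial; congr (_, _); first by rewrite /= mulVg.
apply/ffunP => k; rewrite !ffunE addr0; congr (if _ then _ else _).
exact: (can2_eq (permKV _) (permK _) k x0).
Qed.

Lemma has_monomial_unitvN (j : 'I_n) : has_monomial (gtrans (- unitv j l%:Z)).
Proof.
have -> : - unitv j l%:Z = unitv j (- l%:Z).
  by apply/ffunP => m; rewrite !ffunE; case: eqP; rewrite ?oppr0.
pose y0 := Ordinal n_gt0; apply: (@has_monomial_unitv_move (((cyc n)^-1)%g y0)).
have MB := has_monomial_gen (gen_B n hb l p c cm) (oner_neq0 _).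
have := has_monomial_gmul MB (has_monomial_gperm (cyc n)).
congr has_monomial; congr (_, _); first by rewrite /= mulgV.
apply/ffunP => k; rewrite !ffunE addr0; congr (if _ then _ else _).
exact: (can2_eq (permK _) (permKV _) k y0).
Qed.

Lemma has_monomial_diag : has_monomial (gtrans [ffun=> (l %/ p)%:Z]).
Proof.
apply: (has_monomial_gen (gen_C n hb l p c cm)); rewrite prodf_seq_neq0.
by apply/allP => i _ /=; rewrite prodf_seq_neq0; apply/allP => m _ /=; apply: linear_neq0.
Qed.

Lemma has_monomial_diagN : has_monomial (gtrans (- [ffun=> (l %/ p)%:Z])).
Proof.
have -> : - [ffun=> (l %/ p)%:Z] = [ffun=> - (l %/ p)%:Z] :> {ffun 'I_n -> int}.
  by apply/ffunP => m; rewrite !ffunE.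
exact: (has_monomial_gen (gen_D n hb l p c cm) (oner_neq0 _)).
Qed.

Lemma inT_sum_unitv (t : {ffun 'I_n -> int}) (k : int) (a : 'I_n -> int) :
    (forall j, t j = a j * l%:Z + k * (l %/ p)%:Z) ->
  t = \sum_(j < n) unitv j l%:Z *~ a j + [ffun=> (l %/ p)%:Z] *~ k.
Proof.
move=> tE; apply/ffunP => m; rewrite tE !ffunE sum_ffunE (bigD1 m) //= big1 => [|j jm].
  by rewrite !ffunMzE !ffunE eqxx addr0 !mulrzz; congr (_ + _); apply: mulrC.
by rewrite ffunMzE ffunE eq_sym (negPf jm) mul0rz.
Qed.

Lemma has_monomial_inT g : inT l p g.2 -> has_monomial g.
Proof.
case: g => s t [k [a /= /inT_sum_unitv ->]]; rewrite -gmul_gperm_gtrans.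
apply/(has_monomial_gmul (has_monomial_gperm s))/has_monomial_gtransD.
  apply: has_monomial_gtrans_sum => j.
  exact: has_monomial_gtransMz (has_monomial_unitv j) (has_monomial_unitvN j).
exact: has_monomial_gtransMz has_monomial_diag has_monomial_diagN.
Qed.

End Translations.

End PartiallySpherical.

Theorem proposition3p14 (n l p : nat) (hbar c : CC) (cm : nat -> CC) :
  (0 < n)%N -> (0 < l)%N -> (0 < p)%N -> (p %| l)%N ->
  hbar != 0 ->
  (forall m : nat, (0 < m < l)%N -> ~~ (p %| m)%N -> cm m = 0) ->
  @principal_galois_order n hbar l p (@partSph n hbar l p c cm).
Proof.
move=> n_gt0 _ _ _ _ _.
have Tmon := @has_monomial_inT n hbar l p c cm n_gt0.
split; last exact: partSph_principal.
split; first split.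
- exact: partSph_inKK.
- exact: partSph_skeq.
- exact: partSph_tofrac.
- exact: partSph_cat.
- exact: partSph_skmul.
- by move=> s; split; [apply: UK_inKK|apply: inKK_UK Tmon].
- by move=> s; split; [apply: KU_inKK|apply: inKK_KU Tmon].
Qed.
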